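(* For every $n\ge5$, the Johnson graph $J(n,2)$ and the Kneser graph $K(n,2)$ have no quantum symmetry.
   Context: $J(n,2)$ has as vertices the $2$-element subsets of $\{1,\dots,n\}$, two vertices adjacent iff the subsets intersect in exactly one element. $K(n,2)$ has the same vertices, two vertices adjacent iff the subsets are disjoint. For a finite simple undirected graph $\Gamma=(V,E)$ with $V=\{1,\dots,N\}$, $C(G_{aut}^+(\Gamma))$ is the universal unital $C^*$-algebra generated by $u_{ij}$, $1\le i,j\le N$, with relations: (R1) $u_{ij}=u_{ij}^*=u_{ij}^2$; (R2) $\sum_{l} u_{il}=1=\sum_{l} u_{li}$ for all $i$; (R3) $u_{ij}u_{kl}=u_{kl}u_{ij}=0$ whenever exactly one of $(i,k)\in E$, $(j,l)\in E$ holds. $\Gamma$ has no quantum symmetry if $C(G_{aut}^+(\Gamma))$ is commutative. *)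

From Stdlib Require Import Reals List Arith.
Import ListNotations.
Open Scope R_scope.

Definition Cx : Type := (R * R)%type.
Definition Cx_re (z : Cx) : R := fst z.
Definition Cx_im (z : Cx) : R := snd z.
Definition Cx0 : Cx := (0, 0).
Definition Cx1 : Cx := (1, 0).
Definition Cx_add (z w : Cx) : Cx := (fst z + fst w, snd z + snd w).
Definition Cx_mul (z w : Cx) : Cx :=
  (fst z * fst w - snd z * snd w, fst z * snd w + snd z * fst w).
Definition Cx_conj (z : Cx) : Cx := (fst z, - snd z).
Definition Cx_abs (z : Cx) : R := sqrt (fst z * fst z + snd z * snd z).

Record CstarAlg : Type := {
  car :> Type;
  c0 : car;
  c1 : car;
  cadd : car -> car -> car;
  copp : car -> car;
  cmul : car -> car -> car;
  cscal : Cx -> car -> car;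
  cstar : car -> car;
  cnorm : car -> R;
  cadd_assoc : forall x y z, cadd x (cadd y z) = cadd (cadd x y) z;
  cadd_comm : forall x y, cadd x y = cadd y x;
  cadd_0 : forall x, cadd c0 x = x;
  cadd_opp : forall x, cadd x (copp x) = c0;
  cscal_1 : forall x, cscal Cx1 x = x;
  cscal_mul : forall a b x, cscal (Cx_mul a b) x = cscal a (cscal b x);
  cscal_addl : forall a b x, cscal (Cx_add a b) x = cadd (cscal a x) (cscal b x);
  cscal_addr : forall a x y, cscal a (cadd x y) = cadd (cscal a x) (cscal a y);
  cmul_assoc : forall x y z, cmul x (cmul y z) = cmul (cmul x y) z;
  cmul_1l : forall x, cmul c1 x = x;
  cmul_1r : forall x, cmul x c1 = x;
  cmul_addl : forall x y z, cmul (cadd x y) z = cadd (cmul x z) (cmul y z);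
  cmul_addr : forall x y z, cmul x (cadd y z) = cadd (cmul x y) (cmul x z);
  cmul_scall : forall a x y, cmul (cscal a x) y = cscal a (cmul x y);
  cmul_scalr : forall a x y, cmul x (cscal a y) = cscal a (cmul x y);
  cstar_invol : forall x, cstar (cstar x) = x;
  cstar_add : forall x y, cstar (cadd x y) = cadd (cstar x) (cstar y);
  cstar_scal : forall a x, cstar (cscal a x) = cscal (Cx_conj a) (cstar x);
  cstar_mul : forall x y, cstar (cmul x y) = cmul (cstar y) (cstar x);
  cnorm_nonneg : forall x, 0 <= cnorm x;
  cnorm_eq0 : forall x, cnorm x = 0 -> x = c0;
  cnorm_triangle : forall x y, cnorm (cadd x y) <= cnorm x + cnorm y;
  cnorm_scal : forall a x, cnorm (cscal a x) = Cx_abs a * cnorm x;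
  cnorm_submult : forall x y, cnorm (cmul x y) <= cnorm x * cnorm y;
  cnorm_cstar : forall x, cnorm (cmul (cstar x) x) = cnorm x * cnorm x;
  ccomplete : forall s : nat -> car,
    (forall eps, 0 < eps -> exists N, forall m k, (N <= m)%nat -> (N <= k)%nat ->
        cnorm (cadd (s m) (copp (s k))) < eps) ->
    exists L, forall eps, 0 < eps -> exists N, forall m, (N <= m)%nat ->
        cnorm (cadd (s m) (copp L)) < eps
}.

Arguments c0 {_}. Arguments c1 {_}.
Arguments cadd {_}. Arguments cmul {_}. Arguments cstar {_}.

(** A finite simple graph given by an (duplicate-free) list of vertices and an
    adjacency relation. [u] assigns to each pair of vertices an element of [A]. *)
Definition magic_graph_rel {V : Type} (A : CstarAlg) (verts : list V)
    (adj : V -> V -> Prop) (u : V -> V -> A) : Prop :=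
  (forall i j, In i verts -> In j verts ->
     u i j = cstar (u i j) /\ u i j = cmul (u i j) (u i j)) /\
  (forall i, In i verts ->
     fold_right cadd c0 (map (fun l => u i l) verts) = c1 /\
     fold_right cadd c0 (map (fun l => u l i) verts) = c1) /\
  (forall i j k l, In i verts -> In j verts -> In k verts -> In l verts ->
     ((adj i k /\ ~ adj j l) \/ (~ adj i k /\ adj j l)) ->
     cmul (u i j) (u k l) = c0 /\ cmul (u k l) (u i j) = c0).

(** No quantum symmetry: C(G_aut^+(Gamma)) is commutative, i.e. (universal
    property) in every unital C*-algebra the generators of any family
    satisfying R1-R3 commute. *)
Definition no_quantum_symmetry {V : Type} (verts : list V) (adj : V -> V -> Prop) : Prop :=
  forall (A : CstarAlg) (u : V -> V -> A),
    magic_graph_rel A verts adj u ->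
    forall i j k l, In i verts -> In j verts -> In k verts -> In l verts ->
      cmul (u i j) (u k l) = cmul (u k l) (u i j).

(** Ground set {0,...,n-1} (relabelling of {1,...,n}); a 2-subset {a,b} is
    encoded as the pair (a,b) with a < b. *)
Definition two_subsets (n : nat) : list (nat * nat) :=
  flat_map (fun b => map (fun a => (a, b)) (seq 0 b)) (seq 0 n).

Definition inter_size (v w : nat * nat) : nat :=
  length (filter (fun x => orb (Nat.eqb x (fst w)) (Nat.eqb x (snd w)))
                 [fst v; snd v]).

Definition johnson_adj (v w : nat * nat) : Prop := inter_size v w = 1%nat.
Definition kneser_adj (v w : nat * nat) : Prop := inter_size v w = 0%nat.

(* Write u for a magic unitary satisfying R1-R3 for J(n,2) or K(n,2).  In a
   C*-algebra, projections summing to one are pairwise orthogonal; we prove this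
   without spectral theory: an element h of a corner pAp with ‖p ± h‖ ≤ 1 is zero,
   because iterating h ↦ (3h - h³)/2 preserves this condition while multiplying
   ‖h‖ by at least 7/6.  Hence rows and columns of u are orthogonal, and with R3
   this gives u_yB u_xB' = 0 unless |y ∩ x| = |B ∩ B'|.

   From u we build a quantum permutation of the n points.  With
   E_xc = Σ_(B ∋ c) u_xB and w_ac = (Σ_(y ∋ a) E_yc - 1) / (n - 2), counting
   intersections gives E_{a,b}c = w_ac + w_bc.  These sums are projections and
   Σ_a w_ac = 1, which for n ≠ 2, 4 forces the w_ac to be orthogonal projections
   along each column, and by transposition along each row.  Finally
   u_{a,b}{c,d} = E_{a,b}c E_{a,b}d = (w_ac + w_bc)(w_ad + w_bd), and the
   self-adjointness of this product makes w_ac and w_bd commute; so all entries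
   of u commute. *)

From Stdlib Require Import Reals List Arith Lia Lra Bool.
Import ListNotations.
Open Scope R_scope.

(** * Arithmetic in a C*-algebra *)

Infix "⊕" := cadd (at level 50, left associativity).
Infix "⊗" := cmul (at level 40, left associativity).
Notation "r ⋅ x" := (cscal _ (r, 0%R) x) (at level 35, right associativity).
Notation "x ⊖ y" := (x ⊕ (-1) ⋅ y) (at level 50, left associativity).
Notation "x ^*" := (cstar x) (at level 30, format "x ^*").
Notation norm := (cnorm _).

Section Arithmetic.
Context {A : CstarAlg}.
Implicit Types (x y z : A) (r s : R).

Lemma cadd0r x : x ⊕ c0 = x.
Proof. rewrite cadd_comm; apply cadd_0. Qed.

Lemma caddI x y z : x ⊕ y = x ⊕ z -> y = z.
Proof.
  intro H. rewrite <- (cadd_0 _ y), <- (cadd_0 _ z), <- (cadd_opp A x), (cadd_comm _ x).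
  rewrite <- !cadd_assoc, H. reflexivity.
Qed.

Lemma cmul0l x : c0 ⊗ x = c0.
Proof. apply (caddI (c0 ⊗ x)). rewrite <- cmul_addl, cadd_0, cadd0r. reflexivity. Qed.

Lemma cmul0r x : x ⊗ c0 = c0.
Proof. apply (caddI (x ⊗ c0)). rewrite <- cmul_addr, cadd_0, cadd0r. reflexivity. Qed.

Lemma scaleA r s x : r ⋅ s ⋅ x = (r * s) ⋅ x.
Proof. rewrite <- cscal_mul. unfold Cx_mul; simpl. f_equal; f_equal; ring. Qed.

Lemma scaleDl r s x : (r + s) ⋅ x = r ⋅ x ⊕ s ⋅ x.
Proof. rewrite <- cscal_addl. unfold Cx_add; simpl. f_equal; f_equal; ring. Qed.

Lemma scale1 x : 1 ⋅ x = x.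
Proof. apply cscal_1. Qed.

Lemma scale0 x : 0 ⋅ x = c0.
Proof.
  apply (caddI (0 ⋅ x)). rewrite <- scaleDl, cadd0r, Rplus_0_r. reflexivity.
Qed.

Lemma scaler0 r : r ⋅ (@c0 A) = c0.
Proof. rewrite <- (scale0 c0) at 1. rewrite scaleA, Rmult_0_r. apply scale0. Qed.

Lemma subrr x : x ⊖ x = c0.
Proof.
  rewrite <- (scale1 x) at 1. rewrite <- scaleDl, Rplus_opp_r. apply scale0.
Qed.

Lemma subr0_eq x y : x ⊖ y = c0 -> x = y.
Proof.
  intro H. apply (caddI ((-1) ⋅ y)). rewrite cadd_comm, H, cadd_comm, subrr. reflexivity.
Qed.

Lemma scaleK r x : r <> 0 -> (/ r) ⋅ r ⋅ x = x.
Proof. intro Hr. rewrite scaleA, Rinv_l by exact Hr. apply scale1. Qed.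

Lemma cstar_scale r x : (r ⋅ x)^* = r ⋅ x^*.
Proof. rewrite cstar_scal. unfold Cx_conj; simpl. rewrite Ropp_0. reflexivity. Qed.

Lemma cstar0 : (@c0 A)^* = c0.
Proof. rewrite <- (scale0 c0) at 1. rewrite cstar_scale. apply scale0. Qed.

Lemma cstar1 : (@c1 A)^* = c1.
Proof.
  assert (H : forall y : A, c1^* ⊗ y = y).
  { intro y. rewrite <- (cstar_invol _ y) at 1. rewrite <- cstar_mul, cmul_1r.
    apply cstar_invol. }
  rewrite <- (cmul_1r _ (c1^*)). apply H.
Qed.

Lemma norm_scale r x : norm (r ⋅ x) = Rabs r * norm x.
Proof.
  rewrite cnorm_scal. unfold Cx_abs; simpl. f_equal.
  replace (r * r + 0 * 0) with (Rsqr r) by (unfold Rsqr; ring). apply sqrt_Rsqr_abs.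
Qed.

Lemma norm0 : norm (@c0 A) = 0.
Proof. rewrite <- (scale0 c0), norm_scale, Rabs_R0. ring. Qed.

Lemma commute_add x y z : x ⊗ z = z ⊗ x -> y ⊗ z = z ⊗ y -> (x ⊕ y) ⊗ z = z ⊗ (x ⊕ y).
Proof. intros Hx Hy. rewrite cmul_addl, cmul_addr, Hx, Hy. reflexivity. Qed.

Lemma commute_mul x y z : x ⊗ z = z ⊗ x -> y ⊗ z = z ⊗ y -> (x ⊗ y) ⊗ z = z ⊗ (x ⊗ y).
Proof. intros Hx Hy. rewrite <- cmul_assoc, Hy, !cmul_assoc, Hx. reflexivity. Qed.

Definition projection (p : A) : Prop := p^* = p /\ p ⊗ p = p.

Lemma norm_projection_le1 p : projection p -> norm p <= 1.
Proof.
  intros [Hs Hi]. pose proof (cnorm_cstar A p) as H. rewrite Hs, Hi in H.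
  pose proof (cnorm_nonneg A p). nra.
Qed.

Lemma norm_mul_le1 x y : norm x <= 1 -> norm y <= 1 -> norm (x ⊗ y) <= 1.
Proof.
  intros. pose proof (cnorm_submult A x y). pose proof (cnorm_nonneg A x).
  pose proof (cnorm_nonneg A y). nra.
Qed.

Lemma cstar_cmul_eq0 x : x^* ⊗ x = c0 -> x = c0.
Proof.
  intro H. apply cnorm_eq0. pose proof (cnorm_cstar A x) as Hx. rewrite H, norm0 in Hx. nra.
Qed.

End Arithmetic.

Definition rsum {T} (l : list T) (g : T -> R) : R := fold_right Rplus 0 (map g l).

Section RealSums.
Context {T : Type}.
Implicit Types (l : list T) (g : T -> R).

Lemma rsum_app l1 l2 g : rsum (l1 ++ l2) g = rsum l1 g + rsum l2 g.
Proof. induction l1; unfold rsum in *; simpl; [ring | rewrite IHl1; ring]. Qed.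

Lemma rsum_ext l g1 g2 : (forall y, In y l -> g1 y = g2 y) -> rsum l g1 = rsum l g2.
Proof. induction l; intros H; unfold rsum in *; simpl in *; auto. rewrite H, IHl; auto. Qed.

Lemma rsum_add l g1 g2 : rsum l (fun y => g1 y + g2 y) = rsum l g1 + rsum l g2.
Proof. induction l; unfold rsum in *; simpl; [ring | rewrite IHl; ring]. Qed.

Lemma rsum_le l g1 g2 : (forall y, In y l -> g1 y <= g2 y) -> rsum l g1 <= rsum l g2.
Proof.
  induction l; intros H; unfold rsum in *; simpl in *; [lra|].
  specialize (IHl (fun y Hy => H y (or_intror Hy))). specialize (H a (or_introl eq_refl)). lra.
Qed.

Lemma rsum_const l r : rsum l (fun _ => r) = INR (length l) * r.
Proof.
  induction l; unfold rsum in *; simpl length; [simpl; ring|].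
  rewrite S_INR; simpl. rewrite IHl. ring.
Qed.

Lemma rsum_eq0 l g : (forall y, In y l -> g y = 0) -> rsum l g = 0.
Proof. intro H. rewrite (rsum_ext l g (fun _ => 0)), rsum_const by exact H. ring. Qed.

Lemma rsum_single l g b : NoDup l -> In b l ->
  (forall y, In y l -> y <> b -> g y = 0) -> rsum l g = g b.
Proof.
  induction l as [|a l IH]; intros Hnd Hb Hz; [contradiction|].
  inversion Hnd as [|? ? Ha Hl]; subst. change (g a + rsum l g = g b).
  destruct Hb as [<-|Hb].
  - rewrite rsum_eq0; [ring|]. intros y Hy. apply Hz; [now right|]. congruence.
  - assert (Hab : a <> b) by (intros ->; contradiction).
    rewrite (Hz a (or_introl eq_refl) Hab), IH; [ring|exact Hl|exact Hb|].
    intros y Hy Hyb. apply Hz; [now right|exact Hyb].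
Qed.

End RealSums.

(* Convertible to the sums in [magic_graph_rel]. *)
Definition csum {A : CstarAlg} {T} (l : list T) (f : T -> A) : A := fold_right cadd c0 (map f l).

Lemma NoDup_remove_elt {T} (dec : forall a b : T, {a = b} + {a <> b}) x l :
  NoDup l -> NoDup (remove dec x l).
Proof.
  induction l as [|a l IH]; simpl; intros H; [constructor|].
  inversion H as [|? ? Ha Hl]; subst. destruct (dec x a); [auto|].
  constructor; [intro Hin; apply in_remove in Hin; tauto | auto].
Qed.

Section AlgebraSums.
Context {A : CstarAlg} {T : Type}.
Implicit Types (l : list T) (f g : T -> A) (x : A).

Lemma csum_ext l f g : (forall y, In y l -> f y = g y) -> csum l f = csum l g.
Proof. induction l; intros H; unfold csum in *; simpl in *; auto. rewrite H, IHl; auto. Qed.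

Lemma csum_eq0 l f : (forall y, In y l -> f y = c0) -> csum l f = c0.
Proof.
  induction l; intros H; unfold csum in *; simpl in *; auto. rewrite H, IHl; auto. apply cadd_0.
Qed.

Lemma csum_add l f g : csum l (fun y => f y ⊕ g y) = csum l f ⊕ csum l g.
Proof.
  induction l; unfold csum in *; simpl; [symmetry; apply cadd_0|]. rewrite IHl.
  rewrite !cadd_assoc. f_equal. rewrite <- !cadd_assoc. f_equal. apply cadd_comm.
Qed.

Lemma csum_scale l r f : csum l (fun y => r ⋅ f y) = r ⋅ csum l f.
Proof.
  induction l; unfold csum in *; simpl; [symmetry; apply scaler0|]. rewrite IHl, cscal_addr.
  reflexivity.
Qed.

Lemma cmul_csumr l x f : x ⊗ csum l f = csum l (fun y => x ⊗ f y).
Proof.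
  induction l; unfold csum in *; simpl; [apply cmul0r|]. rewrite cmul_addr, IHl. reflexivity.
Qed.

Lemma cmul_csuml l x f : csum l f ⊗ x = csum l (fun y => f y ⊗ x).
Proof.
  induction l; unfold csum in *; simpl; [apply cmul0l|]. rewrite cmul_addl, IHl. reflexivity.
Qed.

Lemma cstar_csum l f : (csum l f)^* = csum l (fun y => (f y)^*).
Proof.
  induction l; unfold csum in *; simpl; [apply cstar0|]. rewrite cstar_add, IHl. reflexivity.
Qed.

Lemma csum_scale_const l (g : T -> R) x : csum l (fun y => g y ⋅ x) = rsum l g ⋅ x.
Proof.
  induction l; unfold csum, rsum in *; simpl; [symmetry; apply scale0|].
  rewrite IHl, scaleDl. reflexivity.
Qed.

Lemma csum_const l x : csum l (fun _ => x) = INR (length l) ⋅ x.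
Proof.
  rewrite <- (Rmult_1_r (INR (length l))), <- rsum_const, <- csum_scale_const.
  apply csum_ext. intros. symmetry. apply scale1.
Qed.

Lemma norm_csum_le l f : norm (csum l f) <= rsum l (fun y => norm (f y)).
Proof.
  induction l; unfold csum, rsum in *; simpl; [rewrite norm0; lra|].
  pose proof (cnorm_triangle A (f a) (fold_right cadd c0 (map f l))). lra.
Qed.

Lemma csum_single l f b : NoDup l -> In b l ->
  (forall y, In y l -> y <> b -> f y = c0) -> csum l f = f b.
Proof.
  induction l as [|a l IH]; intros Hnd Hb Hz; [contradiction|].
  inversion Hnd as [|? ? Ha Hl]; subst. change (f a ⊕ csum l f = f b).
  destruct Hb as [<-|Hb].
  - rewrite csum_eq0; [apply cadd0r|]. intros y Hy. apply Hz; [now right|]. congruence.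
  - assert (Hab : a <> b) by (intros ->; contradiction).
    rewrite (Hz a (or_introl eq_refl) Hab), IH; [apply cadd_0|exact Hl|exact Hb|].
    intros y Hy Hyb. apply Hz; [now right|exact Hyb].
Qed.

Lemma csum_remove (dec : forall a b : T, {a = b} + {a <> b}) l f b :
  NoDup l -> In b l -> csum l f = f b ⊕ csum (remove dec b l) f.
Proof.
  induction l as [|a l IH]; intros Hnd Hb; [contradiction|].
  inversion Hnd as [|? ? Ha Hl]; subst. simpl. destruct (dec b a) as [<-|Hne].
  - rewrite notin_remove; auto.
  - destruct Hb as [->|Hb]; [congruence|]. unfold csum in *; simpl. rewrite IH; auto.
    rewrite !cadd_assoc, (cadd_comm _ (f a)). reflexivity.
Qed.

End AlgebraSums.

Lemma csum_swap {A : CstarAlg} {T U} (l : list T) (l' : list U) (F : T -> U -> A) :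
  csum l (fun a => csum l' (F a)) = csum l' (fun b => csum l (fun a => F a b)).
Proof.
  induction l as [|a l IH]; simpl.
  - change (c0 = csum l' (fun _ => @c0 A)). symmetry. apply csum_eq0. reflexivity.
  - change (csum l' (F a) ⊕ csum l (fun a => csum l' (F a)) =
            csum l' (fun b => F a b ⊕ csum l (fun a => F a b))).
    rewrite IH, csum_add. reflexivity.
Qed.

(** * Linear and polynomial identities *)

Inductive lexpr := LAtom (i : nat) | LScale (r : R) (e : lexpr) | LAdd (e1 e2 : lexpr) | LZero.

Section LinearExpressions.
Context {A : CstarAlg}.

Fixpoint lexpr_eval (env : list A) (e : lexpr) : A :=
  match e with
  | LAtom i => nth i env c0
  | LScale r e => r ⋅ lexpr_eval env e
  | LAdd e1 e2 => lexpr_eval env e1 ⊕ lexpr_eval env e2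
  | LZero => c0
  end.

Fixpoint lexpr_coef (e : lexpr) (i : nat) : R :=
  match e with
  | LAtom j => if Nat.eqb i j then 1 else 0
  | LScale r e => r * lexpr_coef e i
  | LAdd e1 e2 => lexpr_coef e1 i + lexpr_coef e2 i
  | LZero => 0
  end.

Lemma lexpr_eval_coef env e :
  lexpr_eval env e = csum (seq 0 (length env)) (fun i => lexpr_coef e i ⋅ nth i env c0).
Proof.
  induction e as [j|r e IH|e1 IH1 e2 IH2|]; simpl.
  - destruct (Nat.lt_ge_cases j (length env)).
    + rewrite (csum_single _ _ j), Nat.eqb_refl, scale1; [reflexivity|apply seq_NoDup|..].
      * apply in_seq; lia.
      * intros i _ Hij. apply Nat.eqb_neq in Hij. rewrite Hij. apply scale0.
    + rewrite nth_overflow by lia. symmetry. apply csum_eq0. intros i Hi. apply in_seq in Hi.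
      replace (Nat.eqb i j) with false by (symmetry; apply Nat.eqb_neq; lia). apply scale0.
  - rewrite IH, <- csum_scale. apply csum_ext. intros. apply scaleA.
  - rewrite IH1, IH2, <- csum_add. apply csum_ext. intros. symmetry. apply scaleDl.
  - symmetry. apply csum_eq0. intros. apply scale0.
Qed.

Lemma lexpr_eval_eq env e1 e2 :
  (forall i, (i < length env)%nat -> lexpr_coef e1 i = lexpr_coef e2 i) ->
  lexpr_eval env e1 = lexpr_eval env e2.
Proof.
  intros H. rewrite !lexpr_eval_coef. apply csum_ext. intros i Hi. apply in_seq in Hi.
  rewrite H by lia. reflexivity.
Qed.

Lemma eq_lincomb1 (P Q X Y : A) k : P = Q -> X ⊖ Y = k ⋅ (P ⊖ Q) -> X = Y.
Proof. intros H1 H2. apply subr0_eq. rewrite H2, H1, subrr. apply scaler0. Qed.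

Lemma eq_lincomb2 (P1 Q1 P2 Q2 X Y : A) k1 k2 : P1 = Q1 -> P2 = Q2 ->
  X ⊖ Y = k1 ⋅ (P1 ⊖ Q1) ⊕ k2 ⋅ (P2 ⊖ Q2) -> X = Y.
Proof.
  intros H1 H2 H3. apply subr0_eq. rewrite H3, H1, H2, !subrr, !scaler0. apply cadd_0.
Qed.

End LinearExpressions.

Ltac lexpr_mem x l :=
  lazymatch l with
  | @nil _ => constr:(false)
  | @cons _ x _ => constr:(true)
  | @cons _ _ ?l' => lexpr_mem x l'
  end.
Ltac lexpr_atoms t l :=
  lazymatch t with
  | @cadd _ ?x ?y => let l1 := lexpr_atoms x l in lexpr_atoms y l1
  | cscal _ (?r, 0) ?x => lexpr_atoms x l
  | @c0 _ => l
  | _ => let b := lexpr_mem t l in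
         lazymatch b with true => l | false => constr:(t :: l) end
  end.
Ltac lexpr_index x l :=
  lazymatch l with
  | @cons _ x _ => constr:(O)
  | @cons _ _ ?l' => let i := lexpr_index x l' in constr:(S i)
  end.
Ltac lexpr_reify t l :=
  lazymatch t with
  | @cadd _ ?x ?y => let a := lexpr_reify x l in let b := lexpr_reify y l in constr:(LAdd a b)
  | cscal _ (?r, 0) ?x => let a := lexpr_reify x l in constr:(LScale r a)
  | @c0 _ => constr:(LZero)
  | _ => let i := lexpr_index t l in constr:(LAtom i)
  end.

(* Terms other than [⊕], [r ⋅ _] and [c0] are treated as atoms; the two sides
   are compared atom by atom with [lra]. *)
Ltac linear_identity :=
  lazymatch goal with
  | |- @eq (car ?A) ?lhs ?rhs =>
      let l := lexpr_atoms lhs (@nil (car A)) in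
      let l := lexpr_atoms rhs l in
      let e1 := lexpr_reify lhs l in
      let e2 := lexpr_reify rhs l in
      change (lexpr_eval l e1 = lexpr_eval l e2); apply lexpr_eval_eq;
      let i := fresh "i" in let Hi := fresh "Hi" in intros i Hi; simpl in Hi;
      let rec coefs := destruct i as [|i]; [simpl; lra | (lia || coefs)] in coefs
  end.

Tactic Notation "linear_combination" constr(k) constr(H) :=
  apply (eq_lincomb1 _ _ _ _ k H); linear_identity.
Tactic Notation "linear_combination" constr(k1) constr(H1) constr(k2) constr(H2) :=
  apply (eq_lincomb2 _ _ _ _ _ _ k1 k2 H1 H2); linear_identity.

Fixpoint padd (u v : list R) : list R :=
  match u, v with
  | [], v => v
  | u, [] => u
  | a :: u', b :: v' => (a + b) :: padd u' v'
  end.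

Definition pscale (r : R) (u : list R) : list R := map (Rmult r) u.

Fixpoint pmul (u v : list R) : list R :=
  match u with
  | [] => []
  | a :: u' => padd (pscale a v) (0 :: pmul u' v)
  end.

Definition cubic : list R := [0; 3/2; 0; -1/2].

Ltac coef_eq := let i := fresh "i" in
  intro i; do 7 (destruct i as [|i]; [cbn; lra|]); cbn; reflexivity.

Section CornerPolynomials.
Context {A : CstarAlg}.
Variables p g : A.
Hypothesis pp : p ⊗ p = p.
Hypothesis pg : p ⊗ g = g.
Hypothesis gp : g ⊗ p = g.

(* Coefficient lists are evaluated at [g] in the corner algebra, whose unit is [p]. *)
Fixpoint peval (cs : list R) : A :=
  match cs with
  | [] => c0
  | c :: cs' => c ⋅ p ⊕ g ⊗ peval cs'
  end.

Lemma cmul_p_peval cs : p ⊗ peval cs = peval cs.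
Proof.
  induction cs; simpl; [apply cmul0r|].
  rewrite cmul_addr, cmul_scalr, pp, cmul_assoc, pg. reflexivity.
Qed.

Lemma commute_peval_g cs : peval cs ⊗ g = g ⊗ peval cs.
Proof.
  induction cs as [|c cs IH]; simpl; [rewrite cmul0r; apply cmul0l|].
  rewrite cmul_addl, cmul_addr, cmul_scall, cmul_scalr, gp, pg, <- cmul_assoc, IH,
    cmul_assoc. reflexivity.
Qed.

Lemma peval_padd u v : peval (padd u v) = peval u ⊕ peval v.
Proof.
  revert v; induction u as [|a u IH]; intros [|b v]; simpl; try (symmetry; apply cadd_0);
    [symmetry; apply cadd0r|].
  rewrite IH, cmul_addr, scaleDl. linear_identity.
Qed.

Lemma peval_pscale r u : peval (pscale r u) = r ⋅ peval u.
Proof.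
  induction u as [|a u IH]; simpl; [symmetry; apply scaler0|].
  fold (pscale r u). rewrite IH, cscal_addr, scaleA, cmul_scalr. reflexivity.
Qed.

Lemma peval_pmul u v : peval (pmul u v) = peval u ⊗ peval v.
Proof.
  induction u as [|a u IH]; simpl; [symmetry; apply cmul0l|].
  rewrite peval_padd, peval_pscale. simpl.
  rewrite IH, scale0, cadd_0, cmul_addl, cmul_scall, cmul_p_peval, cmul_assoc. reflexivity.
Qed.

Lemma peval_eq0 v : (forall i, nth i v 0 = 0) -> peval v = c0.
Proof.
  induction v as [|b v IH]; intros H; simpl; [reflexivity|].
  rewrite IH by exact (fun i => H (S i)). specialize (H 0%nat). simpl in H.
  rewrite H, scale0, cmul0r. apply cadd_0.
Qed.

Lemma peval_ext u v : (forall i, nth i u 0 = nth i v 0) -> peval u = peval v.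
Proof.
  revert v; induction u as [|a u IH]; intros [|b v] H.
  - reflexivity.
  - symmetry. apply peval_eq0. intro i. rewrite <- H. destruct i; reflexivity.
  - apply peval_eq0. intro i. rewrite H. destruct i; reflexivity.
  - simpl. rewrite (IH v (fun i => H (S i))). specialize (H 0%nat). simpl in H.
    rewrite H. reflexivity.
Qed.

Lemma peval_selfadjoint : p^* = p -> g^* = g -> forall cs, (peval cs)^* = peval cs.
Proof.
  intros Hp Hg cs; induction cs as [|c cs IH]; simpl; [apply cstar0|].
  rewrite cstar_add, cstar_scale, Hp, cstar_mul, IH, Hg, commute_peval_g. reflexivity.
Qed.

Lemma cmul_peval_p cs : peval cs ⊗ p = peval cs.
Proof.
  induction cs as [|c cs IH]; simpl; [apply cmul0l|].
  rewrite cmul_addl, cmul_scall, pp, <- cmul_assoc, IH. reflexivity.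
Qed.

Lemma peval_linear a b : peval [a; b] = a ⋅ p ⊕ b ⋅ g.
Proof. simpl. rewrite cmul0r, cadd0r, cmul_scalr, gp. reflexivity. Qed.

Lemma peval_one : peval [1] = p.
Proof. simpl. rewrite cmul0r, cadd0r. apply scale1. Qed.

Lemma peval_X : peval [0; 1] = g.
Proof. rewrite peval_linear, scale0, scale1. apply cadd_0. Qed.

Lemma peval_add_X : peval [1; 1] = p ⊕ g.
Proof. rewrite peval_linear, !scale1. reflexivity. Qed.

Lemma peval_sub_X : peval [1; -1] = p ⊖ g.
Proof. rewrite peval_linear, scale1. reflexivity. Qed.

Ltac peval_identity :=
  rewrite <- ?peval_add_X, <- ?peval_sub_X, <- ?peval_X, <- ?peval_one;
  repeat (rewrite <- peval_pmul || rewrite <- peval_pscale || rewrite <- peval_padd);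
  apply peval_ext; coef_eq.

Lemma peval_cubic : peval cubic = (3/2) ⋅ g ⊕ (-1/2) ⋅ (g ⊗ g ⊗ g).
Proof. peval_identity. Qed.

(* [p ± peval cubic] are convex combinations of products of [p + g] and [p - g],
   hence contractions when these are. *)
Lemma add_peval_cubic : p ⊕ peval cubic =
  (1/4) ⋅ ((p ⊕ g) ⊗ (p ⊕ g) ⊗ (p ⊕ g)) ⊕ (3/4) ⋅ ((p ⊕ g) ⊗ (p ⊕ g) ⊗ (p ⊖ g)).
Proof. peval_identity. Qed.

Lemma sub_peval_cubic : p ⊖ peval cubic =
  (1/4) ⋅ ((p ⊖ g) ⊗ (p ⊖ g) ⊗ (p ⊖ g)) ⊕ (3/4) ⋅ ((p ⊖ g) ⊗ (p ⊖ g) ⊗ (p ⊕ g)).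
Proof. peval_identity. Qed.

Lemma add_3_sq : p ⊕ 3 ⋅ (g ⊗ g) =
  (1/2) ⋅ ((1/2) ⋅ ((p ⊕ g) ⊗ (p ⊕ g) ⊗ (p ⊕ g) ⊗ (p ⊕ g)) ⊕
           (1/2) ⋅ ((p ⊕ g) ⊗ (p ⊕ g) ⊗ (p ⊕ g) ⊗ (p ⊖ g))) ⊕
  (1/2) ⋅ ((1/2) ⋅ ((p ⊕ g) ⊗ (p ⊖ g) ⊗ (p ⊖ g) ⊗ (p ⊖ g)) ⊕
           (1/2) ⋅ ((p ⊖ g) ⊗ (p ⊖ g) ⊗ (p ⊖ g) ⊗ (p ⊖ g))).
Proof. peval_identity. Qed.

End CornerPolynomials.

(** * Projections summing to one are orthogonal *)

Section CornerContractions.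
Context {A : CstarAlg}.
Implicit Types (p q g h x y : A).

Definition pm_contraction p g : Prop :=
  g^* = g /\ p ⊗ g = g /\ g ⊗ p = g /\ norm (p ⊕ g) <= 1 /\ norm (p ⊖ g) <= 1.

Lemma norm_convex_le1 a b x y : 0 <= a -> 0 <= b -> a + b = 1 ->
  norm x <= 1 -> norm y <= 1 -> norm (a ⋅ x ⊕ b ⋅ y) <= 1.
Proof.
  intros Ha Hb Hab Hx Hy. eapply Rle_trans; [apply cnorm_triangle|].
  rewrite !norm_scale, !Rabs_pos_eq by assumption. nra.
Qed.

Lemma pm_contraction_cubic p g : projection p -> pm_contraction p g ->
  pm_contraction p (peval p g cubic).
Proof.
  intros [Hps Hpp] (Hgs & Hpg & Hgp & Hadd & Hsub).
  repeat split.
  - apply peval_selfadjoint; assumption.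
  - apply cmul_p_peval; assumption.
  - apply cmul_peval_p; assumption.
  - rewrite add_peval_cubic by assumption.
    apply norm_convex_le1; try lra; repeat apply norm_mul_le1; assumption.
  - rewrite sub_peval_cubic by assumption.
    apply norm_convex_le1; try lra; repeat apply norm_mul_le1; assumption.
Qed.

Lemma pm_contraction_norm_sq p g : projection p -> pm_contraction p g ->
  3 * (norm g * norm g) <= 2.
Proof.
  intros Hp (Hgs & Hpg & Hgp & Hadd & Hsub). pose proof Hp as [Hps Hpp].
  assert (H1 : norm (p ⊕ 3 ⋅ (g ⊗ g)) <= 1).
  { rewrite add_3_sq by assumption.
    repeat apply norm_convex_le1; try lra; repeat apply norm_mul_le1; assumption. }
  assert (H2 : 3 ⋅ (g ⊗ g) = (p ⊕ 3 ⋅ (g ⊗ g)) ⊖ p) by linear_identity.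
  assert (Hsq : norm (g ⊗ g) = norm g * norm g)
    by (rewrite <- Hgs at 1; apply cnorm_cstar).
  pose proof (norm_projection_le1 p Hp).
  pose proof (cnorm_triangle A (p ⊕ 3 ⋅ (g ⊗ g)) ((-1) ⋅ p)) as H3.
  rewrite <- H2, !norm_scale, Hsq, Rabs_pos_eq, Rabs_left in H3 by lra.
  lra.
Qed.

Lemma norm_cubic_growth p g : projection p -> pm_contraction p g ->
  7/6 * norm g <= norm (peval p g cubic).
Proof.
  intros Hp Hg. pose proof (pm_contraction_norm_sq p g Hp Hg) as Hsq.
  destruct Hp as [Hps Hpp]. destruct Hg as (Hgs & Hpg & Hgp & _).
  rewrite peval_cubic by assumption.
  pose proof (cnorm_triangle A ((3/2) ⋅ g ⊕ (-1/2) ⋅ (g ⊗ g ⊗ g)) ((1/2) ⋅ (g ⊗ g ⊗ g))) as H.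
  replace ((3/2) ⋅ g ⊕ (-1/2) ⋅ (g ⊗ g ⊗ g) ⊕ (1/2) ⋅ (g ⊗ g ⊗ g)) with ((3/2) ⋅ g) in H
    by linear_identity.
  rewrite !norm_scale, !Rabs_pos_eq in H by lra.
  pose proof (cnorm_submult A (g ⊗ g) g). pose proof (cnorm_submult A g g).
  pose proof (cnorm_nonneg A g). pose proof (cnorm_nonneg A (g ⊗ g)).
  assert (norm (g ⊗ g ⊗ g) <= norm g * norm g * norm g) by nra.
  nra.
Qed.

(* Iterating [h ↦ peval p h cubic] keeps [h] in the unit ball but multiplies its
   norm by at least [7/6] each time. *)
Lemma pm_contraction_eq0 p g : projection p -> pm_contraction p g -> g = c0.
Proof.
  intros Hp Hg.
  set (gs k := Nat.iter k (fun h => peval p h cubic) g).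
  assert (Hgs : forall k, pm_contraction p (gs k))
    by (induction k; [exact Hg | apply pm_contraction_cubic; assumption]).
  assert (Hgrowth : forall k, (7/6) ^ k * norm g <= norm (gs k)).
  { induction k as [|k IH]; [simpl; lra|].
    pose proof (norm_cubic_growth p (gs k) Hp (Hgs k)).
    change (7/6 * (7/6) ^ k * norm g <= norm (peval p (gs k) cubic)). lra. }
  assert (Hbound : forall k, norm (gs k) <= 1).
  { intro k. pose proof (pm_contraction_norm_sq p (gs k) Hp (Hgs k)).
    pose proof (cnorm_nonneg A (gs k)). nra. }
  pose proof (cnorm_nonneg A g).
  destruct (Req_dec (norm g) 0) as [H0|Hpos]; [now apply cnorm_eq0|exfalso].
  destruct (Pow_x_infinity (7/6) ltac:(rewrite Rabs_pos_eq; lra) (2 / norm g)) as [N HN].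
  specialize (HN N (le_n N)). rewrite Rabs_pos_eq in HN by (apply pow_le; lra).
  assert (2 <= (7/6) ^ N * norm g).
  { replace 2 with (2 / norm g * norm g) by (field; lra). apply Rmult_le_compat_r; lra. }
  specialize (Hgrowth N). specialize (Hbound N). lra.
Qed.

(* [y / (1 + t)] satisfies the hypotheses of [pm_contraction_eq0]. *)
Lemma corner_eq0_of_norm_le p y t : projection p -> y^* = y -> p ⊗ y = y -> y ⊗ p = y ->
  0 <= t -> norm (p ⊖ y) <= 1 -> norm (t ⋅ p ⊕ y) <= t -> y = c0.
Proof.
  intros Hp Hys Hpy Hyp Ht Hsub Hadd.
  pose proof (norm_projection_le1 p Hp).
  set (e := / (1 + t)).
  assert (He : 0 < e) by (apply Rinv_0_lt_compat; lra).
  assert (HeE : e * (1 + t) = 1) by (apply Rinv_l; lra).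
  assert (Hh : e ⋅ y = c0).
  { apply (pm_contraction_eq0 p); [exact Hp|]. repeat split.
    - rewrite cstar_scale, Hys. reflexivity.
    - rewrite cmul_scalr, Hpy. reflexivity.
    - rewrite cmul_scall, Hyp. reflexivity.
    - replace (p ⊕ e ⋅ y) with (e ⋅ (p ⊕ (t ⋅ p ⊕ y))) by linear_identity.
      rewrite norm_scale, Rabs_pos_eq by lra.
      pose proof (cnorm_triangle A p (t ⋅ p ⊕ y)). nra.
    - replace (p ⊖ e ⋅ y) with (e ⋅ ((p ⊖ y) ⊕ t ⋅ p)) by linear_identity.
      rewrite norm_scale, Rabs_pos_eq by lra.
      pose proof (cnorm_triangle A (p ⊖ y) (t ⋅ p)) as Htri.
      rewrite norm_scale, Rabs_pos_eq in Htri by lra.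
      assert (norm ((p ⊖ y) ⊕ t ⋅ p) <= 1 + t) by nra. nra. }
  rewrite <- (scale1 y), <- HeE, Rmult_comm, <- scaleA, Hh. apply scaler0.
Qed.

Lemma projection_compl q : projection q -> projection (c1 ⊖ q).
Proof.
  intros [Hs Hq]. split.
  - rewrite cstar_add, cstar1, cstar_scale, Hs. reflexivity.
  - rewrite cmul_addl, cmul_1l, cmul_scall, cmul_addr, cmul_1r, cmul_scalr, Hq. linear_identity.
Qed.

Lemma norm_sub_compress_le1 p q : projection p -> projection q -> norm (p ⊖ p ⊗ q ⊗ p) <= 1.
Proof.
  intros Hp Hq. set (r := c1 ⊖ q).
  destruct (projection_compl q Hq) as [Hrs Hrr]. fold r in Hrs, Hrr.
  pose proof Hp as [Hps Hpp].
  assert (E : p ⊖ p ⊗ q ⊗ p = (r ⊗ p)^* ⊗ (r ⊗ p)).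
  { rewrite cstar_mul, Hrs, Hps, cmul_assoc, <- (cmul_assoc _ p r r), Hrr.
    unfold r. rewrite cmul_addr, cmul_1r, cmul_scalr, cmul_addl, Hpp, cmul_scall. reflexivity. }
  assert (Hrp : norm (r ⊗ p) <= 1)
    by (apply norm_mul_le1; apply norm_projection_le1; split; assumption).
  pose proof (cnorm_nonneg A (r ⊗ p)). rewrite E, cnorm_cstar. nra.
Qed.

Lemma orthogonal_of_projection_sum {T} (l : list T) (f : T -> A) p q :
  projection p -> projection q -> (forall z, In z l -> projection (f z)) ->
  p ⊕ q ⊕ csum l f = c1 -> p ⊗ q = c0.
Proof.
  intros Hp Hq Hl Hsum. pose proof Hp as [Hps Hpp]. pose proof Hq as [Hqs Hqq].
  (* [p q p] is minus the sum of the [p f z p]; adding [t p] turns it into a sum of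
     [t] contractions. *)
  set (y := p ⊗ q ⊗ p).
  assert (Hy : y = (-1) ⋅ csum l (fun z => p ⊗ f z ⊗ p)).
  { assert (H : p ⊗ (p ⊕ q ⊕ csum l f) ⊗ p = p) by (rewrite Hsum, cmul_1r; exact Hpp).
    rewrite !cmul_addr, !cmul_addl, Hpp, Hpp, cmul_csumr, cmul_csuml in H.
    fold y in H. linear_combination 1 H. }
  set (t := INR (length l)).
  assert (Hty : t ⋅ p ⊕ y = csum l (fun z => p ⊖ p ⊗ f z ⊗ p)).
  { rewrite csum_add, csum_scale, csum_const, Hy. reflexivity. }
  assert (Hy0 : y = c0).
  { apply (corner_eq0_of_norm_le p y t Hp).
    - unfold y. rewrite !cstar_mul, Hps, Hqs, cmul_assoc. reflexivity.
    - unfold y. rewrite !cmul_assoc, Hpp. reflexivity.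
    - unfold y. rewrite <- !cmul_assoc, Hpp. reflexivity.
    - apply pos_INR.
    - apply norm_sub_compress_le1; assumption.
    - rewrite Hty. eapply Rle_trans; [apply norm_csum_le|].
      unfold t. rewrite <- (Rmult_1_r (INR (length l))), <- rsum_const.
      apply rsum_le. intros z Hz. apply norm_sub_compress_le1; auto. }
  assert (Hqp : q ⊗ p = c0).
  { apply cstar_cmul_eq0. rewrite cstar_mul, Hps, Hqs, cmul_assoc, <- (cmul_assoc _ p q q), Hqq.
    exact Hy0. }
  rewrite <- Hps, <- Hqs, <- cstar_mul, Hqp. apply cstar0.
Qed.

Lemma projection_partition_orthogonal {T} (dec : forall a b : T, {a = b} + {a <> b})
  (l : list T) (f : T -> A) b b' : NoDup l -> (forall z, In z l -> projection (f z)) ->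
  csum l f = c1 -> In b l -> In b' l -> b <> b' -> f b ⊗ f b' = c0.
Proof.
  intros Hnd Hl Hsum Hb Hb' Hne.
  set (l1 := remove dec b l).
  assert (Hb'1 : In b' l1) by (apply in_in_remove; auto).
  rewrite (csum_remove dec l f b Hnd Hb) in Hsum. fold l1 in Hsum.
  rewrite (csum_remove dec l1 f b' (NoDup_remove_elt dec b l Hnd) Hb'1), cadd_assoc in Hsum.
  apply (orthogonal_of_projection_sum (remove dec b' l1) f _ _ (Hl b Hb) (Hl b' Hb'));
    [|exact Hsum].
  intros z Hz. apply Hl. apply in_remove in Hz as [Hz _]. apply in_remove in Hz as [Hz _].
  exact Hz.
Qed.

End CornerContractions.

(** * Idempotent pair sums *)

Lemma orthogonal_of_anticommute {A : CstarAlg} (e f : A) :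
  e ⊗ e = e -> e ⊗ f ⊕ f ⊗ e = c0 -> e ⊗ f = c0.
Proof.
  intros He Hac.
  assert (L : e ⊗ (e ⊗ f ⊕ f ⊗ e) = c0) by (rewrite Hac; apply cmul0r).
  assert (R : (e ⊗ f ⊕ f ⊗ e) ⊗ e = c0) by (rewrite Hac; apply cmul0l).
  rewrite cmul_addr, !cmul_assoc, He in L. rewrite cmul_addl, <- !cmul_assoc, He, cmul_assoc in R.
  assert (C : e ⊗ f = f ⊗ e) by linear_combination 1 L (-1) R.
  rewrite <- C in Hac.
  assert (H2 : 2 ⋅ (e ⊗ f) = c0) by (rewrite <- Hac; linear_identity).
  rewrite <- (scaleK 2 (e ⊗ f)), H2 by lra. apply scaler0.
Qed.

Definition idem_defect {A : CstarAlg} (x : A) : A := x ⊗ x ⊖ x.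

Section PairIdempotents.
Context {A : CstarAlg}.
Variables (n : nat) (w : nat -> A).
Hypothesis n_neq2 : n <> 2%nat.
Hypothesis n_neq4 : n <> 4%nat.
Hypothesis pair_idem : forall a b, (a < n)%nat -> (b < n)%nat -> a <> b ->
  (w a ⊕ w b) ⊗ (w a ⊕ w b) = w a ⊕ w b.
Hypothesis sum1 : csum (seq 0 n) w = c1.

Let d a := idem_defect (w a).

Lemma anticommutator_pair a b : (a < n)%nat -> (b < n)%nat -> a <> b ->
  w a ⊗ w b ⊕ w b ⊗ w a = (-1) ⋅ (d a ⊕ d b).
Proof.
  intros Ha Hb Hab. pose proof (pair_idem a b Ha Hb Hab) as H.
  rewrite cmul_addl, !cmul_addr in H. unfold d, idem_defect. linear_combination 1 H.
Qed.

(* Summing the anticommutators of [w a] with all [w b] gives [2 w a], since the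
   [w b] sum to one. *)
Lemma defect_sum_relation a : (a < n)%nat -> (INR n - 4) ⋅ d a ⊕ csum (seq 0 n) d = c0.
Proof.
  intros Ha.
  set (G b := w a ⊗ w b ⊕ w b ⊗ w a). set (H b := (-1) ⋅ (d a ⊕ d b)).
  set (l' := remove Nat.eq_dec a (seq 0 n)).
  assert (Hin : In a (seq 0 n)) by (apply in_seq; lia).
  assert (EG : csum (seq 0 n) G = w a ⊕ w a).
  { unfold G. rewrite csum_add, <- cmul_csumr, <- cmul_csuml, sum1, cmul_1r, cmul_1l.
    reflexivity. }
  assert (EGH : csum l' G = csum l' H).
  { apply csum_ext. intros b Hb. apply in_remove in Hb as [Hb Hba]. apply in_seq in Hb.
    apply anticommutator_pair; lia. }
  assert (EH : csum (seq 0 n) H = (-1) ⋅ (INR n ⋅ d a ⊕ csum (seq 0 n) d)).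
  { unfold H. rewrite csum_scale, csum_add, csum_const, length_seq. reflexivity. }
  rewrite (csum_remove Nat.eq_dec _ G a (seq_NoDup n 0) Hin) in EG.
  rewrite (csum_remove Nat.eq_dec _ H a (seq_NoDup n 0) Hin) in EH.
  fold l' in EG, EH. rewrite EGH in EG.
  unfold G, H, d, idem_defect in EG, EH |- *. linear_combination (-1) EG 1 EH.
Qed.

Lemma defect_eq0 a : (a < n)%nat -> d a = c0.
Proof.
  assert (Hn2 : INR n <> 2) by (intro H; apply n_neq2, INR_eq; rewrite H; simpl; lra).
  assert (Hn4 : INR n <> 4) by (intro H; apply n_neq4, INR_eq; rewrite H; simpl; lra).
  set (D := csum (seq 0 n) d).
  assert (HD : D = c0).
  { assert (E : csum (seq 0 n) (fun a => (INR n - 4) ⋅ d a ⊕ D) = c0).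
    { apply csum_eq0. intros b Hb. apply in_seq in Hb. apply defect_sum_relation. lia. }
    rewrite csum_add, csum_scale, csum_const, length_seq in E. fold D in E.
    rewrite <- (scaleK (2 * INR n - 4) D) by lra.
    replace ((2 * INR n - 4) ⋅ D) with ((INR n - 4) ⋅ D ⊕ INR n ⋅ D) by linear_identity.
    rewrite E. apply scaler0. }
  intros Ha. pose proof (defect_sum_relation a Ha) as E. fold D in E. rewrite HD, cadd0r in E.
  rewrite <- (scaleK (INR n - 4) (d a)), E by lra. apply scaler0.
Qed.

Lemma pair_idempotent_idempotent a : (a < n)%nat -> w a ⊗ w a = w a.
Proof. intros Ha. apply subr0_eq. exact (defect_eq0 a Ha). Qed.

Lemma pair_idempotent_orthogonal a b : (a < n)%nat -> (b < n)%nat -> a <> b ->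
  w a ⊗ w b = c0.
Proof.
  intros Ha Hb Hab. apply orthogonal_of_anticommute; [apply pair_idempotent_idempotent; lia|].
  rewrite anticommutator_pair, !defect_eq0 by assumption. rewrite cadd_0. apply scaler0.
Qed.

End PairIdempotents.

Lemma commute_of_selfadjoint_product {A : CstarAlg} (P Q R S : A) :
  P^* = P -> Q^* = Q -> P ⊗ P = P -> P ⊗ R = c0 -> P ⊗ S = c0 -> S ⊗ P = c0 ->
  R ⊗ Q = c0 -> ((P ⊕ R) ⊗ (S ⊕ Q))^* = (P ⊕ R) ⊗ (S ⊕ Q) -> P ⊗ Q = Q ⊗ P.
Proof.
  intros Ps Qs PP PR PS SP RQ Us. set (U := (P ⊕ R) ⊗ (S ⊕ Q)) in Us.
  assert (PU : P ⊗ U = P ⊗ Q).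
  { unfold U. rewrite cmul_assoc, (cmul_addr _ P P R), PP, PR, cadd0r, cmul_addr, PS.
    apply cadd_0. }
  assert (UP : U ⊗ P = P ⊗ Q ⊗ P).
  { unfold U. rewrite <- cmul_assoc, (cmul_addl _ S Q P), SP, cadd_0, cmul_addl,
      (cmul_assoc _ R Q P), RQ, cmul0l, cadd0r, cmul_assoc. reflexivity. }
  assert (QP : Q ⊗ P = P ⊗ Q ⊗ P).
  { transitivity ((P ⊗ Q)^*); [rewrite cstar_mul, Ps, Qs; reflexivity|].
    rewrite <- PU at 1. rewrite cstar_mul, Us, Ps. exact UP. }
  transitivity ((Q ⊗ P)^*); [rewrite cstar_mul, Ps, Qs; reflexivity|].
  rewrite QP, !cstar_mul, Ps, Qs, cmul_assoc. reflexivity.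
Qed.

(** * Two-element subsets *)

Lemma two_subsets_S n : two_subsets (S n) = two_subsets n ++ map (fun a => (a, n)) (seq 0 n).
Proof. unfold two_subsets. rewrite seq_S, flat_map_app. simpl. rewrite app_nil_r. reflexivity. Qed.

Lemma in_two_subsets n x : In x (two_subsets n) <-> (fst x < snd x < n)%nat.
Proof.
  destruct x as [a b]. unfold two_subsets. rewrite in_flat_map. simpl. split.
  - intros [c [Hc Hin]]. apply in_map_iff in Hin as [d [Hd Hd']].
    inversion Hd; subst. apply in_seq in Hc. apply in_seq in Hd'. lia.
  - intros H. exists b. split; [apply in_seq; lia|].
    apply in_map_iff. exists a. split; [reflexivity|apply in_seq; lia].
Qed.

Lemma NoDup_two_subsets n : NoDup (two_subsets n).
Proof.
  induction n; [constructor|]. rewrite two_subsets_S. apply NoDup_app; auto.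
  - apply NoDup_map_NoDup_ForallPairs; [|apply seq_NoDup]. intros x y _ _ H. now inversion H.
  - intros x H1 H2. apply in_map_iff in H2 as [a [<- _]]. apply in_two_subsets in H1.
    simpl in H1. lia.
Qed.

Definition incid (c : nat) (B : nat * nat) : R :=
  if (c =? fst B) || (c =? snd B) then 1 else 0.

Definition kdelta (c a : nat) : R := if c =? a then 1 else 0.

Lemma incid_kdelta c B : (fst B <> snd B)%nat -> incid c B = kdelta c (fst B) + kdelta c (snd B).
Proof.
  intros H. unfold incid, kdelta.
  destruct (Nat.eqb_spec c (fst B)), (Nat.eqb_spec c (snd B)); simpl; lra || lia.
Qed.

Lemma incid_minmax c d :
  incid c (Nat.min c d, Nat.max c d) = 1 /\ incid d (Nat.min c d, Nat.max c d) = 1.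
Proof.
  unfold incid; simpl. destruct (Nat.le_ge_cases c d).
  - rewrite Nat.min_l, Nat.max_r, !Nat.eqb_refl, orb_true_r by assumption. split; reflexivity.
  - rewrite Nat.min_r, Nat.max_l, !Nat.eqb_refl, orb_true_r by assumption. split; reflexivity.
Qed.

Lemma incid_sq c B : incid c B * incid c B = incid c B.
Proof. unfold incid. destruct (_ || _); ring. Qed.

Lemma rsum_kdelta n c : (c < n)%nat -> rsum (seq 0 n) (fun a => kdelta a c) = 1.
Proof.
  intros H. rewrite (rsum_single _ _ c); [unfold kdelta; rewrite Nat.eqb_refl; reflexivity|
    apply seq_NoDup|apply in_seq; lia|].
  intros y _ Hy. unfold kdelta. apply Nat.eqb_neq in Hy. rewrite Hy. reflexivity.
Qed.

Lemma rsum_incid_points n y : In y (two_subsets n) -> rsum (seq 0 n) (fun a => incid a y) = 2.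
Proof.
  intros Hy. apply in_two_subsets in Hy.
  rewrite (rsum_ext _ _ (fun a => kdelta a (fst y) + kdelta a (snd y))).
  - rewrite rsum_add, !rsum_kdelta by lia. ring.
  - intros a _. apply incid_kdelta. lia.
Qed.

Lemma rsum_incid_sets n c : (c < n)%nat -> rsum (two_subsets n) (incid c) = INR n - 1.
Proof.
  induction n; intros Hc; [lia|].
  rewrite two_subsets_S, rsum_app, S_INR. unfold rsum at 2. rewrite map_map.
  fold (rsum (seq 0 n) (fun a => incid c (a, n))).
  destruct (Nat.eq_dec c n) as [->|Hne].
  - rewrite rsum_eq0, (rsum_ext _ _ (fun _ => 1)), rsum_const, length_seq; [ring| |].
    + intros a _. unfold incid; simpl. rewrite Nat.eqb_refl, orb_true_r. reflexivity.
    + intros B HB. apply in_two_subsets in HB. unfold incid.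
      destruct (Nat.eqb_spec n (fst B)), (Nat.eqb_spec n (snd B)); simpl;
        [exfalso; lia..|reflexivity].
  - assert (E : rsum (seq 0 n) (fun a => incid c (a, n)) = rsum (seq 0 n) (fun a => kdelta a c)).
    { apply rsum_ext. intros a _. unfold incid, kdelta; simpl.
      destruct (Nat.eqb_spec c n); [lia|]. rewrite orb_false_r, Nat.eqb_sym. reflexivity. }
    rewrite IHn, E, rsum_kdelta by lia. ring.
Qed.

Lemma rsum_incid_incid n c c' : (c < n)%nat -> (c' < n)%nat ->
  rsum (two_subsets n) (fun B => incid c B * incid c' B) = if c =? c' then INR n - 1 else 1.
Proof.
  intros Hc Hc'. destruct (Nat.eqb_spec c c') as [<-|Hne].
  - rewrite <- (rsum_incid_sets n c Hc). apply rsum_ext. intros. apply incid_sq.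
  - rewrite (rsum_single _ _ (Nat.min c c', Nat.max c c'));
      [|apply NoDup_two_subsets|apply in_two_subsets; simpl; lia|].
    + unfold incid; simpl.
      destruct (Nat.min_spec c c') as [[? ->]|[? ->]], (Nat.max_spec c c') as [[? ->]|[? ->]];
        rewrite ?Nat.eqb_refl; simpl; rewrite ?orb_true_r; simpl; lra || lia.
    + intros [b1 b2] Hy Hne2. apply in_two_subsets in Hy. unfold incid; simpl in *.
      destruct (Nat.eqb_spec c b1), (Nat.eqb_spec c b2), (Nat.eqb_spec c' b1),
        (Nat.eqb_spec c' b2); simpl; try ring; exfalso; apply Hne2; f_equal; lia.
Qed.

Lemma inter_size_incid v w : INR (inter_size v w) = incid (fst v) w + incid (snd v) w.
Proof.
  unfold inter_size, incid. simpl.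
  destruct ((fst v =? fst w) || (fst v =? snd w)), ((snd v =? fst w) || (snd v =? snd w));
    simpl; lra.
Qed.

Lemma inter_size_diag v : inter_size v v = 2%nat.
Proof. unfold inter_size; simpl. rewrite !Nat.eqb_refl, orb_true_r. reflexivity. Qed.

Lemma inter_size_le2 v w : (inter_size v w <= 2)%nat.
Proof. unfold inter_size; simpl. destruct (_ || _), (_ || _); simpl; lia. Qed.

Section TwoSubsets.
Variable n : nat.
Local Notation V := (two_subsets n).

Lemma inter_size_sym v w : In v V -> In w V -> inter_size v w = inter_size w v.
Proof.
  intros Hv Hw. apply in_two_subsets in Hv, Hw. destruct v as [v1 v2], w as [w1 w2].
  unfold inter_size; simpl in *.
  destruct (Nat.eqb_spec v1 w1), (Nat.eqb_spec v1 w2), (Nat.eqb_spec v2 w1),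
    (Nat.eqb_spec v2 w2), (Nat.eqb_spec w1 v1), (Nat.eqb_spec w1 v2), (Nat.eqb_spec w2 v1),
    (Nat.eqb_spec w2 v2); simpl; auto; lia.
Qed.

Lemma inter_size_eq2 v w : In v V -> In w V -> inter_size v w = 2%nat <-> v = w.
Proof.
  intros Hv Hw. apply in_two_subsets in Hv, Hw. destruct v as [v1 v2], w as [w1 w2].
  unfold inter_size; simpl in *. split.
  - destruct (Nat.eqb_spec v1 w1), (Nat.eqb_spec v1 w2), (Nat.eqb_spec v2 w1),
      (Nat.eqb_spec v2 w2); simpl; intro H; try discriminate; f_equal; lia.
  - intros H. inversion H; subst. rewrite !Nat.eqb_refl. simpl. rewrite orb_true_r. reflexivity.
Qed.

Lemma inter_size_neq2 v w : In v V -> In w V -> v <> w -> (inter_size v w < 2)%nat.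
Proof.
  intros Hv Hw Hne. pose proof (inter_size_le2 v w).
  assert (inter_size v w <> 2%nat) by (rewrite inter_size_eq2; assumption). lia.
Qed.

Lemma rsum_incid_inter_size c B' : (c < n)%nat -> In B' V ->
  rsum V (fun B => incid c B * INR (inter_size B B')) = 2 + (INR n - 2) * incid c B'.
Proof.
  intros Hc HB'. pose proof HB' as HB2. apply in_two_subsets in HB2.
  rewrite (rsum_ext _ _ (fun B => incid c B * incid (fst B') B + incid c B * incid (snd B') B)).
  - rewrite rsum_add, !rsum_incid_incid by lia. unfold incid.
    destruct (Nat.eqb_spec c (fst B')), (Nat.eqb_spec c (snd B')); simpl; try lia; ring.
  - intros B HB. rewrite inter_size_sym, inter_size_incid by assumption. ring.
Qed.

Lemma incid_both_unique c d B B1 : In B V -> In B1 V -> c <> d -> incid c B = 1 ->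
  incid d B = 1 -> B1 <> B -> incid c B1 * incid d B1 = 0.
Proof.
  intros HB HB1 Hcd H1 H2 Hne. apply in_two_subsets in HB, HB1.
  destruct B as [p q], B1 as [p1 q1]. unfold incid in *; simpl in *.
  destruct (Nat.eqb_spec c p), (Nat.eqb_spec c q), (Nat.eqb_spec d p), (Nat.eqb_spec d q),
    (Nat.eqb_spec c p1), (Nat.eqb_spec c q1), (Nat.eqb_spec d p1), (Nat.eqb_spec d q1);
    simpl in *; try lra; exfalso; apply Hne; f_equal; lia.
Qed.

End TwoSubsets.

(** * Magic unitaries preserving intersection sizes *)

Record inter_size_magic {A : CstarAlg} (n : nat) (u : nat * nat -> nat * nat -> A) : Prop := {
  magic_proj : forall x B, In x (two_subsets n) -> In B (two_subsets n) -> projection (u x B);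
  magic_row : forall x, In x (two_subsets n) -> csum (two_subsets n) (u x) = c1;
  magic_col : forall B, In B (two_subsets n) -> csum (two_subsets n) (fun y => u y B) = c1;
  magic_inter : forall y x B B', In y (two_subsets n) -> In x (two_subsets n) ->
    In B (two_subsets n) -> In B' (two_subsets n) ->
    inter_size y x <> inter_size B B' -> u y B ⊗ u x B' = c0
}.

Section ContainmentProjections.
Context {A : CstarAlg}.
Variables (n : nat) (u : nat * nat -> nat * nat -> A).
Hypothesis Hu : inter_size_magic n u.
Local Notation V := (two_subsets n).

Lemma magic_row_orthogonal x B B' : In x V -> In B V -> In B' V -> B <> B' ->
  u x B ⊗ u x B' = c0.
Proof.
  intros Hx HB HB' Hne. apply (magic_inter _ _ Hu); auto.
  rewrite inter_size_diag. intro E. symmetry in E. apply (inter_size_eq2 n B B') in E; auto.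
Qed.

Definition contains_proj x c := csum V (fun B => incid c B ⋅ u x B).

Lemma contains_proj_selfadjoint x c : In x V -> (contains_proj x c)^* = contains_proj x c.
Proof.
  intros Hx. unfold contains_proj. rewrite cstar_csum. apply csum_ext. intros B HB.
  rewrite cstar_scale, (proj1 (magic_proj _ _ Hu x B Hx HB)). reflexivity.
Qed.

Lemma contains_proj_mul_u x c B : In x V -> In B V ->
  contains_proj x c ⊗ u x B = incid c B ⋅ u x B.
Proof.
  intros Hx HB. unfold contains_proj. rewrite cmul_csuml, (csum_single _ _ B).
  - rewrite cmul_scall, (proj2 (magic_proj _ _ Hu x B Hx HB)). reflexivity.
  - apply NoDup_two_subsets.
  - exact HB.
  - intros B' HB' Hne. rewrite cmul_scall, magic_row_orthogonal by auto. apply scaler0.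
Qed.

Lemma contains_proj_projection x c : In x V -> projection (contains_proj x c).
Proof.
  intros Hx. split; [apply contains_proj_selfadjoint; exact Hx|].
  unfold contains_proj at 2. rewrite cmul_csumr. apply csum_ext. intros B HB.
  rewrite cmul_scalr, contains_proj_mul_u, scaleA, incid_sq by assumption. reflexivity.
Qed.

Lemma contains_proj_mul x c d B : In x V -> In B V -> c <> d ->
  incid c B = 1 -> incid d B = 1 -> contains_proj x c ⊗ contains_proj x d = u x B.
Proof.
  intros Hx HB Hcd Hc Hd. unfold contains_proj at 2. rewrite cmul_csumr.
  rewrite (csum_single _ _ B).
  - rewrite cmul_scalr, contains_proj_mul_u, scaleA, Hc, Hd, Rmult_1_l by assumption.
    apply scale1.
  - apply NoDup_two_subsets.
  - exact HB.
  - intros B1 HB1 Hne. rewrite cmul_scalr, contains_proj_mul_u, scaleA by assumption.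
    rewrite Rmult_comm, (incid_both_unique n c d B B1) by assumption. apply scale0.
Qed.

Lemma magic_intertwines_inter_size x B : In x V -> In B V ->
  csum V (fun y => INR (inter_size y x) ⋅ u y B) =
  csum V (fun B' => INR (inter_size B B') ⋅ u x B').
Proof.
  intros Hx HB.
  transitivity (csum V (fun y => csum V (fun B' => INR (inter_size y x) ⋅ (u y B ⊗ u x B')))).
  { apply csum_ext. intros y Hy. rewrite csum_scale, <- cmul_csumr, (magic_row _ _ Hu x Hx).
    rewrite cmul_1r. reflexivity. }
  transitivity (csum V (fun B' => csum V (fun y => INR (inter_size B B') ⋅ (u y B ⊗ u x B')))).
  2: { apply csum_ext. intros B' HB'. rewrite csum_scale, <- cmul_csuml,
         (magic_col _ _ Hu B HB), cmul_1l. reflexivity. }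
  rewrite csum_swap. apply csum_ext. intros B' HB'. apply csum_ext. intros y Hy.
  destruct (Nat.eq_dec (inter_size y x) (inter_size B B')) as [E|E].
  - rewrite E. reflexivity.
  - rewrite (magic_inter _ _ Hu) by assumption. rewrite !scaler0. reflexivity.
Qed.

Definition point_sum a c := csum V (fun y => incid a y ⋅ contains_proj y c).

Lemma point_sum_selfadjoint a c : (point_sum a c)^* = point_sum a c.
Proof.
  unfold point_sum. rewrite cstar_csum. apply csum_ext. intros y Hy.
  rewrite cstar_scale, contains_proj_selfadjoint by exact Hy. reflexivity.
Qed.

Lemma point_sum_pair a b c : In (a, b) V -> (c < n)%nat ->
  point_sum a c ⊕ point_sum b c = 2 ⋅ c1 ⊕ (INR n - 2) ⋅ contains_proj (a, b) c.
Proof.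
  intros Hx Hc. set (x := (a, b)) in *. unfold point_sum. rewrite <- csum_add.
  transitivity (csum V (fun y => csum V (fun B => incid c B ⋅ (INR (inter_size y x) ⋅ u y B)))).
  { apply csum_ext. intros y Hy. rewrite <- scaleDl, (inter_size_sym n y x Hy Hx), inter_size_incid.
    unfold contains_proj. rewrite <- csum_scale. apply csum_ext. intros B _.
    rewrite !scaleA, Rmult_comm. reflexivity. }
  rewrite csum_swap.
  transitivity (csum V (fun B => incid c B ⋅ csum V (fun B' => INR (inter_size B B') ⋅ u x B'))).
  { apply csum_ext. intros B HB. rewrite <- magic_intertwines_inter_size, csum_scale
      by assumption. reflexivity. }
  transitivity (csum V (fun B' => rsum V (fun B => incid c B * INR (inter_size B B')) ⋅ u x B')).
  { transitivity (csum V (fun B => csum V (fun B' =>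
                    (incid c B * INR (inter_size B B')) ⋅ u x B'))).
    - apply csum_ext. intros B _. rewrite <- csum_scale. apply csum_ext. intros. apply scaleA.
    - rewrite csum_swap. apply csum_ext. intros. apply csum_scale_const. }
  transitivity (csum V (fun B' => 2 ⋅ u x B' ⊕ (INR n - 2) ⋅ (incid c B' ⋅ u x B'))).
  { apply csum_ext. intros B' HB'. rewrite rsum_incid_inter_size, scaleDl, scaleA by assumption.
    reflexivity. }
  rewrite csum_add, !csum_scale, (magic_row _ _ Hu x Hx). reflexivity.
Qed.

Lemma point_sum_total c : (c < n)%nat ->
  csum (seq 0 n) (fun a => point_sum a c) = (2 * (INR n - 1)) ⋅ c1.
Proof.
  intros Hc. unfold point_sum. rewrite csum_swap.
  transitivity (csum V (fun y => 2 ⋅ contains_proj y c)).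
  { apply csum_ext. intros y Hy. rewrite csum_scale_const, rsum_incid_points by exact Hy.
    reflexivity. }
  rewrite csum_scale. unfold contains_proj. rewrite csum_swap.
  transitivity (2 ⋅ csum V (fun B => incid c B ⋅ @c1 A)).
  { f_equal. apply csum_ext. intros B HB. rewrite csum_scale, (magic_col _ _ Hu B HB).
    reflexivity. }
  rewrite csum_scale_const, rsum_incid_sets, scaleA by exact Hc. reflexivity.
Qed.

End ContainmentProjections.

Definition point_proj {A : CstarAlg} n (u : nat * nat -> nat * nat -> A) a c : A :=
  (/ (INR n - 2)) ⋅ (point_sum n u a c ⊖ c1).

Section PointProjections.
Context {A : CstarAlg}.
Variables (n : nat) (u : nat * nat -> nat * nat -> A).
Hypothesis n_ge5 : (5 <= n)%nat.
Hypothesis Hu : inter_size_magic n u.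
Local Notation V := (two_subsets n).
Local Notation W := (point_proj n u).
Local Notation E := (contains_proj n u).

Lemma INR_n_sub2_neq0 : INR n - 2 <> 0.
Proof. apply (le_INR 5) in n_ge5. simpl in n_ge5. lra. Qed.

Lemma contains_proj_point_proj a b c : In (a, b) V -> (c < n)%nat ->
  E (a, b) c = W a c ⊕ W b c.
Proof.
  intros Hx Hc. unfold point_proj. rewrite <- cscal_addr.
  replace (point_sum n u a c ⊖ c1 ⊕ (point_sum n u b c ⊖ c1))
    with (point_sum n u a c ⊕ point_sum n u b c ⊖ 2 ⋅ c1) by linear_identity.
  rewrite point_sum_pair by assumption.
  replace (2 ⋅ c1 ⊕ (INR n - 2) ⋅ E (a, b) c ⊖ 2 ⋅ c1) with ((INR n - 2) ⋅ E (a, b) c)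
    by linear_identity.
  symmetry. apply scaleK, INR_n_sub2_neq0.
Qed.

Lemma contains_proj_point_proj_minmax a b c : (a < n)%nat -> (b < n)%nat -> a <> b ->
  (c < n)%nat -> E (Nat.min a b, Nat.max a b) c = W a c ⊕ W b c.
Proof.
  intros Ha Hb Hab Hc. destruct (Nat.lt_ge_cases a b).
  - rewrite Nat.min_l, Nat.max_r by lia. apply contains_proj_point_proj; [|exact Hc].
    apply in_two_subsets. simpl. lia.
  - rewrite Nat.min_r, Nat.max_l, cadd_comm by lia. apply contains_proj_point_proj; [|exact Hc].
    apply in_two_subsets. simpl. lia.
Qed.

Lemma csum_point_proj c : (c < n)%nat -> csum (seq 0 n) (fun a => W a c) = c1.
Proof.
  intros Hc. unfold point_proj.
  rewrite csum_scale, csum_add, point_sum_total, csum_const, length_seq by assumption.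
  replace ((2 * (INR n - 1)) ⋅ c1 ⊕ INR n ⋅ ((-1) ⋅ c1)) with ((INR n - 2) ⋅ @c1 A)
    by linear_identity.
  apply scaleK, INR_n_sub2_neq0.
Qed.

Lemma point_proj_selfadjoint a c : (W a c)^* = W a c.
Proof.
  unfold point_proj.
  rewrite cstar_scale, cstar_add, cstar_scale, cstar1, (point_sum_selfadjoint n u Hu).
  reflexivity.
Qed.

Lemma point_proj_pair_idempotent c a b : (a < n)%nat -> (b < n)%nat -> a <> b ->
  (c < n)%nat -> (W a c ⊕ W b c) ⊗ (W a c ⊕ W b c) = W a c ⊕ W b c.
Proof.
  intros Ha Hb Hab Hc. rewrite <- contains_proj_point_proj_minmax by assumption.
  assert (Hx : In (Nat.min a b, Nat.max a b) V) by (apply in_two_subsets; simpl; lia).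
  exact (proj2 (contains_proj_projection n u Hu _ c Hx)).
Qed.

Lemma point_proj_idempotent a c : (a < n)%nat -> (c < n)%nat -> W a c ⊗ W a c = W a c.
Proof.
  intros Ha Hc. apply (pair_idempotent_idempotent n (fun a => W a c)); try lia.
  - intros. apply point_proj_pair_idempotent; assumption.
  - apply csum_point_proj. exact Hc.
Qed.

Lemma point_proj_col_orthogonal a b c : (a < n)%nat -> (b < n)%nat -> a <> b ->
  (c < n)%nat -> W a c ⊗ W b c = c0.
Proof.
  intros Ha Hb Hab Hc. apply (pair_idempotent_orthogonal n (fun a => W a c)); try lia.
  - intros. apply point_proj_pair_idempotent; assumption.
  - apply csum_point_proj. exact Hc.
Qed.

End PointProjections.

Section Transpose.
Context {A : CstarAlg}.
Variables (n : nat) (u : nat * nat -> nat * nat -> A).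
Local Notation V := (two_subsets n).
Local Notation ut := (fun y B => u B y).

Lemma inter_size_magic_transpose : inter_size_magic n u -> inter_size_magic n ut.
Proof.
  intros Hu. split.
  - intros x B Hx HB. exact (magic_proj _ _ Hu B x HB Hx).
  - exact (magic_col _ _ Hu).
  - exact (magic_row _ _ Hu).
  - intros y x B B' Hy Hx HB HB' Hne. apply (magic_inter _ _ Hu); auto.
Qed.

Lemma point_sum_transpose a c : point_sum n ut a c = point_sum n u c a.
Proof.
  unfold point_sum, contains_proj.
  transitivity (csum V (fun y => csum V (fun B => incid a y ⋅ incid c B ⋅ u B y))).
  { apply csum_ext. intros. symmetry. apply csum_scale. }
  rewrite csum_swap. apply csum_ext. intros B _. rewrite <- csum_scale. apply csum_ext.
  intros y _. rewrite !scaleA, Rmult_comm. reflexivity.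
Qed.

Lemma point_proj_transpose a c : point_proj n ut a c = point_proj n u c a.
Proof. unfold point_proj. rewrite point_sum_transpose. reflexivity. Qed.

End Transpose.

Section Commutation.
Context {A : CstarAlg}.
Variables (n : nat) (u : nat * nat -> nat * nat -> A).
Hypothesis n_ge5 : (5 <= n)%nat.
Hypothesis Hu : inter_size_magic n u.
Local Notation V := (two_subsets n).
Local Notation W := (point_proj n u).

Lemma point_proj_row_orthogonal a c d : (a < n)%nat -> (c < n)%nat -> (d < n)%nat -> c <> d ->
  W a c ⊗ W a d = c0.
Proof.
  intros. rewrite <- !(point_proj_transpose n u).
  apply point_proj_col_orthogonal; auto using inter_size_magic_transpose.
Qed.

Lemma magic_point_proj a b c d : In (a, b) V -> In (c, d) V ->
  u (a, b) (c, d) = (W a c ⊕ W b c) ⊗ (W a d ⊕ W b d).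
Proof.
  intros Hx HB. pose proof HB as HB'. apply in_two_subsets in HB'. simpl in HB'.
  rewrite <- (contains_proj_mul n u Hu (a, b) c d (c, d)); auto; try lia.
  - rewrite !(contains_proj_point_proj n u) by (auto; lia). reflexivity.
  - unfold incid; simpl. rewrite Nat.eqb_refl. reflexivity.
  - unfold incid; simpl. rewrite Nat.eqb_refl, orb_true_r. reflexivity.
Qed.

Lemma point_proj_commute a b c d : (a < n)%nat -> (b < n)%nat -> (c < n)%nat -> (d < n)%nat ->
  W a c ⊗ W b d = W b d ⊗ W a c.
Proof.
  intros Ha Hb Hc Hd.
  destruct (Nat.eq_dec a b) as [<-|Hab].
  { destruct (Nat.eq_dec c d) as [<-|Hcd]; [reflexivity|].
    rewrite !point_proj_row_orthogonal; auto. }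
  destruct (Nat.eq_dec c d) as [<-|Hcd].
  { rewrite !point_proj_col_orthogonal; auto. }
  set (x := (Nat.min a b, Nat.max a b)). set (B := (Nat.min c d, Nat.max c d)).
  assert (Hx : In x V) by (apply in_two_subsets; simpl; lia).
  assert (HB : In B V) by (apply in_two_subsets; simpl; lia).
  apply (commute_of_selfadjoint_product _ _ (W b c) (W a d));
    auto using point_proj_selfadjoint, point_proj_idempotent, point_proj_col_orthogonal,
      point_proj_row_orthogonal.
  rewrite <- !(contains_proj_point_proj_minmax n u) by auto.
  fold x. rewrite (contains_proj_mul n u Hu x c d B Hx HB Hcd); try apply incid_minmax.
  apply (magic_proj _ _ Hu); assumption.
Qed.

Lemma magic_commute_point_proj x B a c : In x V -> In B V -> (a < n)%nat -> (c < n)%nat ->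
  u x B ⊗ W a c = W a c ⊗ u x B.
Proof.
  intros Hx HB Ha Hc. destruct x as [x1 x2], B as [b1 b2].
  pose proof Hx as Hx'. pose proof HB as HB'. apply in_two_subsets in Hx', HB'. simpl in *.
  rewrite magic_point_proj by assumption.
  apply commute_mul; apply commute_add; apply point_proj_commute; lia.
Qed.

Lemma magic_commute x B y B' : In x V -> In B V -> In y V -> In B' V ->
  u x B ⊗ u y B' = u y B' ⊗ u x B.
Proof.
  intros Hx HB Hy HB'. destruct y as [y1 y2], B' as [b1 b2].
  pose proof Hy as Hy'. pose proof HB' as HB2. apply in_two_subsets in Hy', HB2. simpl in *.
  rewrite magic_point_proj by assumption. symmetry.
  apply commute_mul; apply commute_add; symmetry; apply magic_commute_point_proj; auto; lia.
Qed.

End Commutation.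

Definition pair_eq_dec : forall x y : nat * nat, {x = y} + {x <> y}.
Proof. decide equality; apply Nat.eq_dec. Defined.

Lemma inter_size_magic_of_graph (A : CstarAlg) n k (u : nat * nat -> nat * nat -> A) :
  (k <= 1)%nat -> magic_graph_rel A (two_subsets n) (fun v w => inter_size v w = k) u ->
  inter_size_magic n u.
Proof.
  intros Hk (R1 & R2 & R3).
  assert (Hproj : forall x B, In x (two_subsets n) -> In B (two_subsets n) -> projection (u x B))
    by (intros x B Hx HB; destruct (R1 x B Hx HB); split; symmetry; assumption).
  split; [exact Hproj|intros; apply R2; assumption|intros; apply R2; assumption|].
  intros y x B B' Hy Hx HB HB' Hne.
  destruct (pair_eq_dec y x) as [<-|Hyx]; [|destruct (pair_eq_dec B B') as [<-|HBB]].
  - assert (B <> B') by (intros <-; rewrite !inter_size_diag in Hne; contradiction).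
    apply (projection_partition_orthogonal pair_eq_dec (two_subsets n) (u y));
      auto using NoDup_two_subsets. apply R2. assumption.
  - apply (projection_partition_orthogonal pair_eq_dec (two_subsets n) (fun z => u z B));
      auto using NoDup_two_subsets. apply R2. assumption.
  - pose proof (inter_size_neq2 n y x Hy Hx Hyx). pose proof (inter_size_neq2 n B B' HB HB' HBB).
    apply (R3 y B x B'); auto. lia.
Qed.

Theorem theorem1p3 (n : nat) (hn : (5 <= n)%nat) :
  no_quantum_symmetry (two_subsets n) johnson_adj /\
  no_quantum_symmetry (two_subsets n) kneser_adj.
Proof.
  split; intros A u Hrel i j k l Hi Hj Hk Hl; apply (magic_commute n u hn); auto.
  - exact (inter_size_magic_of_graph A n 1 u (le_n 1) Hrel).
  - exact (inter_size_magic_of_graph A n 0 u (Nat.le_0_l 1) Hrel).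
Qed.
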